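(* Let $R$ be a $u$-ring, let $n$ be a positive integer and let $I$ be a proper ideal of $R$. Then the following conditions are equivalent: (a) $I$ is a strongly weakly $n$-absorbing ideal of $R$; (b) $I$ is a weakly $n$-absorbing ideal of $R$; (c) for every integer $t$ with $0\leq t\leq n$, all ideals $I_1,\dots,I_t$ of $R$ and all elements $x_1,\dots,x_{n-t}\in R$ such that $x_1\cdots x_{n-t}I_1\cdots I_t\not\subseteq I$, one has $$(I:_R x_1\cdots x_{n-t}I_1\cdots I_t)=\Big[\bigcup_{i=1}^{n-t}(I:_R x_1\cdots\widehat{x_i}\cdots x_{n-t}I_1\cdots I_t)\Big]\cup\Big[\bigcup_{j=1}^{t}(I:_R x_1\cdots x_{n-t}I_1\cdots\widehat{I_j}\cdots I_t)\Big]\cup(0:_R x_1\cdots x_{n-t}I_1\cdots I_t);$$ (d) for every integer $t$ with $0\leq t\leq n$, all ideals $I_1,\dots,I_t$ of $R$ and all elements $x_1,\dots,x_{n-t}\in R$ such that $x_1\cdots x_{n-t}I_1\cdots I_t\not\subseteq I$, either $(I:_R x_1\cdots x_{n-t}I_1\cdots I_t)=(I:_R x_1\cdots\widehat{x_i}\cdots x_{n-t}I_1\cdots I_t)$ for some $1\leq i\leq n-t$, or $(I:_R x_1\cdots x_{n-t}I_1\cdots I_t)=(I:_R x_1\cdots x_{n-t}I_1\cdots\widehat{I_j}\cdots I_t)$ for some $1\leq j\leq t$, or $(I:_R x_1\cdots x_{n-t}I_1\cdots I_t)=(0:_R x_1\cdots x_{n-t}I_1\cdots I_t)$.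
   Context: All rings are commutative with $1\neq 0$. A ring $R$ is a $u$-ring if whenever an ideal of $R$ is contained in a finite union of ideals of $R$, it is contained in one of those ideals. A proper ideal $I$ of $R$ is weakly $n$-absorbing if whenever $0\neq a_1\cdots a_{n+1}\in I$ with $a_1,\dots,a_{n+1}\in R$, there are $n$ of the $a_i$'s whose product is in $I$; it is strongly weakly $n$-absorbing if whenever $0\neq I_1\cdots I_{n+1}\subseteq I$ for ideals $I_1,\dots,I_{n+1}$ of $R$, there are $n$ of the $I_i$'s whose product is contained in $I$. For an ideal (or element) $K$, $(I:_R K)=\{r\in R: rK\subseteq I\}$; $x_1\cdots x_{n-t}I_1\cdots I_t$ denotes the ideal product (elements regarded as principal ideals); a hat $\widehat{\ }$ denotes omission of that factor; an empty product is $R$. *)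

(* Ideals of a commutative ring are represented as
   Prop-valued predicates R -> Prop satisfying the ideal axioms. *)
From mathcomp Require Import all_boot all_order all_algebra.
Set Implicit Arguments. Unset Strict Implicit. Unset Printing Implicit Defensive.
Import GRing.Theory.
Local Open Scope ring_scope.

Section Ideals.
Variable R : comNzRingType.

Definition subI (I J : R -> Prop) : Prop := forall x, I x -> J x.

Definition is_id (I : R -> Prop) : Prop :=
  [/\ I 0, (forall x y, I x -> I y -> I (x + y)) & (forall r x, I x -> I (r * x))].

Definition proper_id (I : R -> Prop) : Prop := is_id I /\ ~ I 1.

Definition fullI : R -> Prop := fun _ => True.
Definition zeroI : R -> Prop := fun x => x = 0.

Definition principal (x : R) : R -> Prop := fun z => exists r, z = r * x.

Definition iprod (I J : R -> Prop) : R -> Prop :=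
  fun z => forall K, is_id K -> (forall a b, I a -> J b -> K (a * b)) -> K z.

Definition iprodl (l : seq (R -> Prop)) : R -> Prop := foldr iprod fullI l.

Definition colon (I K : R -> Prop) : R -> Prop := fun r => forall z, K z -> I (r * z).

Definition u_ring : Prop :=
  forall (I : R -> Prop) (k : nat) (J : 'I_k -> R -> Prop),
    is_id I -> (forall i, is_id (J i)) ->
    subI I (fun x => exists i, J i x) -> exists i, subI I (J i).

Definition weakly_n_absorbing (n : nat) (I : R -> Prop) : Prop :=
  proper_id I /\
  forall a : 'I_n.+1 -> R,
    \prod_(i < n.+1) a i != 0 -> I (\prod_(i < n.+1) a i) ->
    exists j : 'I_n.+1, I (\prod_(i < n.+1 | i != j) a i).

Definition strongly_weakly_n_absorbing (n : nat) (I : R -> Prop) : Prop :=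
  proper_id I /\
  forall F : 'I_n.+1 -> R -> Prop, (forall i, is_id (F i)) ->
    (exists z, iprodl [seq F i | i <- enum 'I_n.+1] z /\ z <> 0) ->
    subI (iprodl [seq F i | i <- enum 'I_n.+1]) I ->
    exists j : 'I_n.+1, subI (iprodl [seq F i | i <- enum 'I_n.+1 & i != j]) I.

Definition mixprod (m t : nat) (x : 'I_m -> R) (F : 'I_t -> R -> Prop) : R -> Prop :=
  iprodl ([seq principal (x i) | i <- enum 'I_m] ++ [seq F j | j <- enum 'I_t]).

Definition mixprod_omx (m t : nat) (x : 'I_m -> R) (F : 'I_t -> R -> Prop) (i0 : 'I_m)
  : R -> Prop :=
  iprodl ([seq principal (x i) | i <- enum 'I_m & i != i0] ++ [seq F j | j <- enum 'I_t]).

Definition mixprod_omI (m t : nat) (x : 'I_m -> R) (F : 'I_t -> R -> Prop) (j0 : 'I_t)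
  : R -> Prop :=
  iprodl ([seq principal (x i) | i <- enum 'I_m] ++ [seq F j | j <- enum 'I_t & j != j0]).

Definition condC (n : nat) (I : R -> Prop) : Prop :=
  forall (t : nat), (t <= n)%N ->
  forall (F : 'I_t -> R -> Prop) (x : 'I_(n - t) -> R),
    (forall j, is_id (F j)) ->
    ~ subI (mixprod x F) I ->
    forall r, colon I (mixprod x F) r <->
      [\/ (exists i, colon I (mixprod_omx x F i) r),
          (exists j, colon I (mixprod_omI x F j) r)
        | colon zeroI (mixprod x F) r].

Definition condD (n : nat) (I : R -> Prop) : Prop :=
  forall (t : nat), (t <= n)%N ->
  forall (F : 'I_t -> R -> Prop) (x : 'I_(n - t) -> R),
    (forall j, is_id (F j)) ->
    ~ subI (mixprod x F) I ->
    [\/ (exists i, forall r, colon I (mixprod x F) r <-> colon I (mixprod_omx x F i) r),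
        (exists j, forall r, colon I (mixprod x F) r <-> colon I (mixprod_omI x F j) r)
      | (forall r, colon I (mixprod x F) r <-> colon zeroI (mixprod x F) r)].

End Ideals.

From mathcomp Require Import all_boot all_order all_algebra ring.
From Stdlib Require Import Classical.
Set Implicit Arguments. Unset Strict Implicit. Unset Printing Implicit Defensive.
Import GRing.Theory.
Local Open Scope ring_scope.

(* The implications (a) => (b) (principal ideals), (c) => (d) (the u-ring property
   applied to the colon ideals) and (d) => (a) (condition (d) for t = n) are direct.
   The heart is (b) => (c), proved by induction on the number t of ideals.  For t = 0
   it is weak n-absorption applied to r, x_1, ..., x_n.  For t > 0, every a in I_1
   can be moved among the elements, and the induction hypothesis for
   x_1 ... x_(n-t) a I_2 ... I_t puts a into one of finitely many ideals: a colon
   ideal for each factor that can be omitted, or an annihilator.  Since R is a u-ring,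
   all of I_1 lies in a single one of them, which is the required omission. *)

Definition cons_fun (T : Type) k (a : T) (f : 'I_k -> T) (i : 'I_k.+1) : T :=
  if unlift ord0 i is Some j then f j else a.

Lemma cons_fun0 (T : Type) k (a : T) (f : 'I_k -> T) : cons_fun a f ord0 = a.
Proof. by rewrite /cons_fun unlift_none. Qed.

Lemma cons_funS (T : Type) k (a : T) (f : 'I_k -> T) i : cons_fun a f (lift ord0 i) = f i.
Proof. by rewrite /cons_fun liftK. Qed.

Lemma big_ord_recl_skip (T : Type) (idx : T) (op : Monoid.law idx) k (P : pred 'I_k.+1) F :
  ~~ P ord0 ->
  \big[op/idx]_(i < k.+1 | P i) F i =
  \big[op/idx]_(i < k | P (lift ord0 i)) F (lift ord0 i).
Proof.
by move=> P0; rewrite big_mkcond big_ord_recl (negbTE P0) Monoid.mul1m -big_mkcond.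
Qed.

Section ConsFunProducts.
Variable R : comNzRingType.

Lemma prod_cons_fun k a (f : 'I_k -> R) :
  \prod_(i < k.+1) cons_fun a f i = a * \prod_(i < k) f i.
Proof. by rewrite big_ord_recl cons_fun0; under eq_bigr do rewrite cons_funS. Qed.

Lemma prod_cons_fun_neq0 k a (f : 'I_k -> R) :
  \prod_(i < k.+1 | i != ord0) cons_fun a f i = \prod_(i < k) f i.
Proof.
rewrite big_ord_recl_skip ?eqxx //.
by apply: eq_big => [i|i _]; rewrite ?cons_funS // eq_sym neq_lift.
Qed.

Lemma prod_cons_fun_neqS k a (f : 'I_k -> R) i0 :
  \prod_(i < k.+1 | i != lift ord0 i0) cons_fun a f i =
  a * \prod_(i < k | i != i0) f i.
Proof.
rewrite (bigD1_ord ord0) ?neq_lift // cons_fun0.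
by congr (a * _); apply: eq_big => [i|i _]; rewrite ?cons_funS // (inj_eq lift_inj).
Qed.

End ConsFunProducts.

Section IdealProducts.
Variable R : comNzRingType.
Implicit Types (K : R -> Prop) (L : seq (R -> Prop)).

Lemma zeroI_id : is_id (@zeroI R).
Proof. by split=> [|x y -> ->|r x ->]; rewrite /zeroI ?addr0 ?mulr0. Qed.

Lemma principal_id (x : R) : is_id (principal x).
Proof.
split=> [|a b [c ->] [d ->]|r a [c ->]]; first by exists 0; rewrite mul0r.
  by exists (c + d); rewrite mulrDl.
by exists (r * c); rewrite mulrA.
Qed.

Lemma mulI_id K a : is_id K -> is_id (fun z => K (a * z)).
Proof.
case=> K0 KD KM; split=> [|x y Hx Hy|r x Hx]; first by rewrite mulr0.
  by rewrite mulrDr; apply: KD.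
by rewrite mulrCA; apply: KM.
Qed.

Lemma forall_mul_id (T : Type) (P : T -> Prop) (e : T -> R) K :
  is_id K -> is_id (fun a => forall w, P w -> K (a * e w)).
Proof.
case=> K0 KD KM; split=> [w _|x y Hx Hy w Pw|r x Hx w Pw]; first by rewrite mul0r.
  by rewrite mulrDl; apply: KD; [apply: Hx | apply: Hy].
by rewrite -mulrA; apply: KM; apply: Hx.
Qed.

Lemma colon_id K A : is_id K -> is_id (colon K A).
Proof. exact: (@forall_mul_id R A id). Qed.

Lemma colon_zero_sub K A r : is_id K -> colon (@zeroI R) A r -> colon K A r.
Proof. by case=> K0 _ _ H z /H ->. Qed.

Fixpoint prods_in L K : Prop :=
  if L is A :: L' then forall a, A a -> prods_in L' (fun z => K (a * z)) else K 1.

Lemma prods_inW L K K' : (forall z, K z -> K' z) -> prods_in L K -> prods_in L K'.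
Proof.
elim: L K K' => [|A L IH] K K' KK' /=; first exact: KK'.
by move=> HK a Aa; apply: IH (HK a Aa) => z; apply: KK'.
Qed.

Lemma subI_iprodl L K : is_id K -> subI (iprodl L) K <-> prods_in L K.
Proof.
elim: L K => [|A L IH] K idK /=.
  split=> [|K1 z _]; first exact.
  by rewrite -[z]mulr1; case: idK => _ _; apply.
split=> [sub a Aa|HL z Hz].
  by apply/(IH _ (mulI_id a idK)) => z Lz; apply: sub => K' _; apply.
by apply: Hz => // a b Aa Lb; move/(IH _ (mulI_id a idK)): (HL a Aa); apply.
Qed.

Lemma prods_in_cat L1 L2 K :
  prods_in (L1 ++ L2) K <-> prods_in L1 (fun z => prods_in L2 (fun w => K (z * w))).
Proof.
elim: L1 K => [|A L1 IH] K /=.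
  by split; apply: prods_inW => z; rewrite mul1r.
split=> H a /H; first by move/IH; do 2![apply: prods_inW => ?]; rewrite mulrA.
by move=> HL; apply/IH; move: HL; do 2![apply: prods_inW => ?]; rewrite mulrA.
Qed.

Lemma prods_in_map (T : eqType) (F : T -> R -> Prop) (s : seq T) K : uniq s ->
  prods_in (map F s) K <->
  forall g : T -> R, (forall i, i \in s -> F i (g i)) -> K (\prod_(i <- s) g i).
Proof.
elim: s K => [|i0 s IH] K /=.
  by split=> [HK g _|/(_ (fun _ => 0))]; rewrite big_nil //; apply.
case/andP=> s'i0 us; split=> [H g Hg|H a Fa].
  rewrite big_cons; have := (IH _ us).1 (H _ (Hg _ (mem_head _ _))) g.
  by apply=> i si; apply: Hg; rewrite inE si orbT.
apply/(IH _ us) => g Hg; pose g' i := if i == i0 then a else g i.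
have -> : \prod_(i <- s) g i = \prod_(i <- s) g' i.
  by apply: eq_big_seq => i si; rewrite /g'; case: eqP => // Ei; rewrite -Ei si in s'i0.
have := H g'; rewrite big_cons /g' eqxx; apply => i; rewrite inE.
by case: eqP => [-> //|_ /= /Hg].
Qed.

Lemma prods_in_principal (T : Type) (x : T -> R) (s : seq T) K :
  (forall r z, K z -> K (r * z)) ->
  prods_in [seq principal (x i) | i <- s] K <-> K (\prod_(i <- s) x i).
Proof.
elim: s K => [|i0 s IH] K KM /=; first by rewrite big_nil.
have KaM a r z : K (a * z) -> K (a * (r * z)) by rewrite mulrCA; apply: KM.
rewrite big_cons; split=> [H|Kx a [c ->]].
  by apply/(IH _ (KaM (x i0))); apply: H; exists 1; rewrite mul1r.
by apply/(IH _ (KaM _)); rewrite -mulrA; apply: KM.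
Qed.

Lemma iprodl_prod_principal (T : Type) (x : T -> R) (s : seq T) :
  iprodl [seq principal (x i) | i <- s] (\prod_(i <- s) x i).
Proof.
elim: s => [|i0 s IH] //=; rewrite big_cons => K _ HK.
by apply: HK IH; exists 1; rewrite mul1r.
Qed.

Lemma subI_iprodl_principal (T : Type) (x : T -> R) (s : seq T) K : is_id K ->
  subI (iprodl [seq principal (x i) | i <- s]) K <-> K (\prod_(i <- s) x i).
Proof.
by move=> idK; rewrite subI_iprodl // prods_in_principal //; case: idK.
Qed.

Definition fprods_in t (Q : pred 'I_t) (F : 'I_t -> R -> Prop) K : Prop :=
  forall g : 'I_t -> R, (forall j, Q j -> F j (g j)) -> K (\prod_(j < t | Q j) g j).

Lemma prods_in_fam t (Q : pred 'I_t) F K :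
  prods_in [seq F j | j <- enum 'I_t & Q j] K <-> fprods_in Q F K.
Proof.
have mem_s j : (j \in [seq j <- enum 'I_t | Q j]) = Q j.
  by rewrite mem_filter mem_enum andbT.
rewrite (prods_in_map _ _ (filter_uniq _ (enum_uniq _))).
split=> H g Hg; move: (H g); rewrite big_filter big_enum_cond; apply=> j.
  by rewrite mem_s; apply: Hg.
by rewrite -mem_s; apply: Hg.
Qed.

Lemma subI_iprodl_fam t (Q : pred 'I_t) F K : is_id K ->
  subI (iprodl [seq F j | j <- enum 'I_t & Q j]) K <-> fprods_in Q F K.
Proof. by move=> idK; rewrite subI_iprodl // prods_in_fam. Qed.

Lemma eq_fprods_in t (Q1 Q2 : pred 'I_t) F K :
  Q1 =1 Q2 -> fprods_in Q1 F K <-> fprods_in Q2 F K.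
Proof.
move=> eqQ; split=> H g Hg.
  by rewrite -(eq_bigl _ _ eqQ); apply: H => j; rewrite eqQ; apply: Hg.
by rewrite (eq_bigl _ _ eqQ); apply: H => j; rewrite -eqQ; apply: Hg.
Qed.

Lemma fprods_inW t (Q : pred 'I_t) F K K' :
  (forall z, K z -> K' z) -> fprods_in Q F K -> fprods_in Q F K'.
Proof. by move=> KK' H g /H /KK'. Qed.

Lemma fprods_in_eqr t (Q : pred 'I_t) F (P : R -> Prop) (e1 e2 : R -> R) :
  (forall z, e1 z = e2 z) ->
  fprods_in Q F (fun z => P (e1 z)) -> fprods_in Q F (fun z => P (e2 z)).
Proof. by move=> e12; apply: fprods_inW => z; rewrite e12. Qed.

Lemma fprods_in_sub t (Q1 Q2 : pred 'I_t) F K :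
  {subset Q1 <= Q2} -> (forall c z, K z -> K (c * z)) ->
  fprods_in Q1 F K -> fprods_in Q2 F K.
Proof.
move=> Q12 KM H g Hg; rewrite (bigID Q1) /= mulrC.
have -> : \prod_(j < t | Q2 j && Q1 j) g j = \prod_(j < t | Q1 j) g j.
  by apply: eq_bigl => j; apply/andb_idl/Q12.
by apply/KM/H => j Q1j; apply/Hg/Q12.
Qed.

Lemma fprods_in0 (Q : pred 'I_0) F K : fprods_in Q F K <-> K 1.
Proof. by split=> [/(_ (fun _ => 0))|K1 g _]; rewrite big_ord0 //; apply; case. Qed.

Lemma fprods_in_recl t (Q : pred 'I_t.+1) F K : Q ord0 ->
  fprods_in Q F K <->
  forall a, F ord0 a ->
    fprods_in (fun j : 'I_t => Q (lift ord0 j)) (fun j : 'I_t => F (lift ord0 j))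
              (fun z => K (a * z)).
Proof.
move=> Q0; split=> [H a Fa g Hg|H g Hg].
  have := H (cons_fun a g); rewrite (bigD1_ord ord0) // cons_fun0.
  under eq_bigr do rewrite cons_funS; apply=> j.
  by case: (unliftP ord0 j) => [j' ->|->]; rewrite ?cons_funS ?cons_fun0 // => /Hg.
rewrite (bigD1_ord ord0) //; apply: H (Hg _ Q0) _ _ => j; exact: Hg.
Qed.

Lemma fprods_in_skip0 t (Q : pred 'I_t.+1) F K : ~~ Q ord0 ->
  fprods_in Q F K <->
  fprods_in (fun j : 'I_t => Q (lift ord0 j)) (fun j : 'I_t => F (lift ord0 j)) K.
Proof.
move=> Q0; split=> [H g Hg|H g Hg].
  have := H (cons_fun 0 g); rewrite big_ord_recl_skip //.
  under eq_bigr do rewrite cons_funS; apply=> j.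
  case: (unliftP ord0 j) => [j' ->|->]; last by rewrite (negbTE Q0).
  by rewrite cons_funS; apply: Hg.
rewrite big_ord_recl_skip //; apply: H => j; exact: Hg.
Qed.

Lemma fprods_in_predC1_0 t (F : 'I_t.+1 -> R -> Prop) K :
  fprods_in (predC1 ord0) F K <-> fprods_in predT (fun j : 'I_t => F (lift ord0 j)) K.
Proof.
by rewrite fprods_in_skip0 //; apply: eq_fprods_in => j; rewrite /= eq_sym neq_lift.
Qed.

Lemma fprods_in_predC1_lift t (F : 'I_t.+1 -> R -> Prop) K j0 :
  fprods_in (predC1 (lift ord0 j0)) F K <->
  forall a, F ord0 a ->
    fprods_in (predC1 j0) (fun j : 'I_t => F (lift ord0 j)) (fun z => K (a * z)).
Proof.
have eqQ : (fun j : 'I_t => lift ord0 j != lift ord0 j0) =1 predC1 j0.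
  by move=> j; rewrite /= (inj_eq lift_inj).
rewrite fprods_in_recl; last exact: neq_lift.
by split=> H a /H /(eq_fprods_in _ _ eqQ).
Qed.

Lemma colon_iprodl m t (P : pred 'I_m) (Q : pred 'I_t) x F K r : is_id K ->
  colon K (iprodl ([seq principal (x i) | i <- enum 'I_m & P i] ++
                   [seq F j | j <- enum 'I_t & Q j])) r <->
  fprods_in Q F (fun z => K (r * (\prod_(i < m | P i) x i * z))).
Proof.
move=> idK; have [_ _ KM] := idK.
have -> : \prod_(i < m | P i) x i = \prod_(i <- [seq i <- enum 'I_m | P i]) x i.
  by rewrite big_filter big_enum_cond.
rewrite -prods_in_fam.
rewrite [colon _ _ _](subI_iprodl _ (mulI_id r idK)) prods_in_cat prods_in_principal //.
move=> c z; apply: prods_inW => w Kw.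
by rewrite -(mulrA c) mulrCA; apply: KM.
Qed.

Lemma colon_mixprod m t (x : 'I_m -> R) (F : 'I_t -> R -> Prop) K r : is_id K ->
  colon K (mixprod x F) r <-> fprods_in predT F (fun z => K (r * (\prod_(i < m) x i * z))).
Proof.
by rewrite /mixprod -[enum 'I_m]filter_predT -[enum 'I_t]filter_predT; exact: colon_iprodl.
Qed.

Lemma colon_mixprod_omx m t (x : 'I_m -> R) (F : 'I_t -> R -> Prop) K r i0 : is_id K ->
  colon K (mixprod_omx x F i0) r <->
  fprods_in predT F (fun z => K (r * (\prod_(i < m | i != i0) x i * z))).
Proof. by rewrite /mixprod_omx -[enum 'I_t]filter_predT; exact: colon_iprodl. Qed.

Lemma colon_mixprod_omI m t (x : 'I_m -> R) (F : 'I_t -> R -> Prop) K r j0 : is_id K ->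
  colon K (mixprod_omI x F j0) r <->
  fprods_in (predC1 j0) F (fun z => K (r * (\prod_(i < m) x i * z))).
Proof. by rewrite /mixprod_omI -[enum 'I_m]filter_predT; exact: colon_iprodl. Qed.

Lemma subI_mixprod m t (x : 'I_m -> R) (F : 'I_t -> R -> Prop) K : is_id K ->
  subI (mixprod x F) K <-> fprods_in predT F (fun z => K (\prod_(i < m) x i * z)).
Proof.
move=> idK; have sub_colon1 : subI (mixprod x F) K <-> colon K (mixprod x F) 1.
  by split=> H z /H; rewrite mul1r.
rewrite sub_colon1 colon_mixprod //.
by split; apply: fprods_inW => z; rewrite mul1r.
Qed.

Lemma colon_mixprod_omx_sub m t (x : 'I_m -> R) (F : 'I_t -> R -> Prop) K r i0 :
  is_id K -> colon K (mixprod_omx x F i0) r -> colon K (mixprod x F) r.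
Proof.
move=> idK; have [_ _ KM] := idK; rewrite colon_mixprod_omx // colon_mixprod //.
apply: fprods_inW => z Kz; rewrite (bigD1 i0) //= -(mulrA (x i0)) mulrCA.
exact: KM.
Qed.

Lemma colon_mixprod_omI_sub m t (x : 'I_m -> R) (F : 'I_t -> R -> Prop) K r j0 :
  is_id K -> colon K (mixprod_omI x F j0) r -> colon K (mixprod x F) r.
Proof.
move=> idK; have [_ _ KM] := idK; rewrite colon_mixprod_omI // colon_mixprod //.
apply: fprods_in_sub => // c z /(KM c).
by rewrite (mulrCA c) (mulrCA c).
Qed.

End IdealProducts.

Section URing.
Variables (R : comNzRingType) (hu : u_ring R).

Lemma u_ring_fin (T : finType) (J : T -> R -> Prop) (H : R -> Prop) :
  is_id H -> (forall i, is_id (J i)) ->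
  subI H (fun a => exists i, J i a) -> exists i, subI H (J i).
Proof.
move=> idH idJ cover.
have cover' : subI H (fun a => exists k : 'I_#|T|, J (enum_val k) a).
  by move=> a /cover[i Ji]; exists (enum_rank i); rewrite enum_rankK.
have [k Hk] := hu idH (fun k => idJ (enum_val k)) cover'.
by exists (enum_val k).
Qed.

Lemma u_ring_cover3 (T1 T2 : finType) (B : T1 -> R -> Prop) (C : T2 -> R -> Prop)
    (D H : R -> Prop) :
  is_id H -> (forall i, is_id (B i)) -> (forall j, is_id (C j)) -> is_id D ->
  subI H (fun a => [\/ exists i, B i a, exists j, C j a | D a]) ->
  [\/ exists i, subI H (B i), exists j, subI H (C j) | subI H D].
Proof.
move=> idH idB idC idD cover.
pose J (k : option (T1 + T2)) := if k is Some k then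
  (match k with inl i => B i | inr j => C j end) else D.
have idJ k : is_id (J k) by case: k => [[]|].
have cover' : subI H (fun a => exists k, J k a).
  move=> a /cover[[i Bi]|[j Cj]|Da]; first by exists (Some (inl i)).
    by exists (Some (inr j)).
  by exists None.
have [[[i|j]|] sub] := u_ring_fin idH idJ cover'.
- by apply: Or31; exists i.
- by apply: Or32; exists j.
- exact: Or33.
Qed.

End URing.

Section WeaklyAbsorbing.
Variables (R : comNzRingType) (I : R -> Prop).

Lemma weakly_absorbing_mul n (x : 'I_n -> R) r : weakly_n_absorbing n I ->
  ~ I (\prod_(i < n) x i) -> I (r * \prod_(i < n) x i) -> r * \prod_(i < n) x i != 0 ->
  exists i0, I (r * \prod_(i < n | i != i0) x i).
Proof.
case=> _ hw nX IrX rX0.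
have [j] : exists j, I (\prod_(i < n.+1 | i != j) cons_fun r x i).
  by apply: hw; rewrite prod_cons_fun.
case: (unliftP ord0 j) => [i0 ->|->]; first by rewrite prod_cons_fun_neqS; exists i0.
by rewrite prod_cons_fun_neq0.
Qed.

Definition colon_split m t (x : 'I_m -> R) (F : 'I_t -> R -> Prop) r : Prop :=
  [\/ exists i0, fprods_in predT F (fun z => I (r * (\prod_(i < m | i != i0) x i * z))),
      exists j0, fprods_in (predC1 j0) F (fun z => I (r * (\prod_(i < m) x i * z)))
    | fprods_in predT F (fun z => zeroI (r * (\prod_(i < m) x i * z)))].

Definition colon_splits m t : Prop :=
  forall (x : 'I_m -> R) (F : 'I_t -> R -> Prop) r, (forall j, is_id (F j)) ->
  ~ fprods_in predT F (fun z => I (\prod_(i < m) x i * z)) ->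
  fprods_in predT F (fun z => I (r * (\prod_(i < m) x i * z))) -> colon_split x F r.

Lemma colon_splits0 m : weakly_n_absorbing m I -> colon_splits m 0.
Proof.
move=> hw x F r _; rewrite !fprods_in0 !mulr1 => nX IrX.
have [rX0|rX0] := eqVneq (r * \prod_(i < m) x i) 0.
  by apply: Or33; apply/fprods_in0; rewrite mulr1.
have [i0 Ii0] := weakly_absorbing_mul hw nX IrX rX0.
by apply: Or31; exists i0; apply/fprods_in0; rewrite mulr1.
Qed.

Lemma colon_split_cons m t (x : 'I_m -> R) (F : 'I_t -> R -> Prop) r a :
  ~ fprods_in predT F (fun z => I (r * (\prod_(i < m) x i * z))) ->
  colon_split (cons_fun a x) F r ->
  [\/ exists i0, fprods_in predT F
                   (fun z => I (a * (r * (\prod_(i < m | i != i0) x i * z)))),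
      exists j0, fprods_in (predC1 j0) F (fun z => I (a * (r * (\prod_(i < m) x i * z))))
    | fprods_in predT F (fun z => zeroI (a * (r * (\prod_(i < m) x i * z))))].
Proof.
move=> nrX [[i' Hi]|[j Hj]|H0].
- case: (unliftP ord0 i') Hi => [i0 ->|->] Hi.
    apply: Or31; exists i0; move: Hi.
    by apply: fprods_in_eqr => z /=; rewrite prod_cons_fun_neqS; ring.
  by case: nrX; move: Hi; apply: fprods_in_eqr => z /=; rewrite prod_cons_fun_neq0.
- apply: Or32; exists j; move: Hj.
  by apply: fprods_in_eqr => z /=; rewrite prod_cons_fun; ring.
- apply: Or33; move: H0.
  by apply: fprods_in_eqr => z /=; rewrite prod_cons_fun; ring.
Qed.

Hypotheses (hu : u_ring R) (idI : is_id I).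

Lemma colon_splitsS m t : colon_splits m.+1 t -> colon_splits m t.+1.
Proof.
move=> IH x F r idF nsub Hr; rewrite /colon_split.
set X := \prod_(i < m) x i in nsub Hr *.
pose F' (j : 'I_t) := F (lift ord0 j).
have [PE|nPE] := classic (fprods_in predT F' (fun z => I (r * (X * z)))).
  by apply: Or32; exists ord0; apply/fprods_in_predC1_0.
pose B (o : option 'I_m) a := if o is Some i0
  then fprods_in predT F' (fun z => I (a * (r * (\prod_(i < m | i != i0) x i * z))))
  else fprods_in predT F' (fun z => I (a * (X * z))).
pose C (j : 'I_t) a := fprods_in (predC1 j) F' (fun z => I (a * (r * (X * z)))).
pose D a := fprods_in predT F' (fun z => zeroI (a * (r * (X * z)))).
have idB o : is_id (B o) by case: o => [i0|]; apply: forall_mul_id.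
have idC j : is_id (C j) by apply: forall_mul_id.
have idD : is_id D by apply: forall_mul_id; apply: zeroI_id.
(* B None collects the a with a x I_2 ... I_t in I, to which the induction hypothesis
   does not apply; it cannot contain all of I_1, since x I_1 ... I_t is not in I. *)
have cover : subI (F ord0) (fun a => [\/ exists o, B o a, exists j, C j a | D a]).
  move=> a Fa; have [Ba|nBa] := classic (B None a); first by apply: Or31; exists None.
  have nsub' : ~ fprods_in predT F' (fun z => I (\prod_(i < m.+1) cons_fun a x i * z)).
    move=> H; apply: nBa; move: H.
    by apply: fprods_in_eqr => z /=; rewrite prod_cons_fun -/X mulrA.
  have Hr' : fprods_in predT F' (fun z => I (r * (\prod_(i < m.+1) cons_fun a x i * z))).
    move/fprods_in_recl: Hr => /(_ isT a Fa).
    by apply: fprods_in_eqr => z /=; rewrite prod_cons_fun -/X; ring.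
  have [[i0 Hi]|Hj|H0] := colon_split_cons nPE (IH _ _ _ (fun j => idF _) nsub' Hr').
  - by apply: Or31; exists (Some i0).
  - exact: Or32.
  - exact: Or33.
have [[[i0|] sub]|[j sub]|sub] := u_ring_cover3 hu (idF ord0) idB idC idD cover.
- apply: Or31; exists i0; apply/fprods_in_recl => // a /sub.
  by apply: fprods_in_eqr => z /=; ring.
- case: nsub; apply/fprods_in_recl => // a /sub.
  by apply: fprods_in_eqr => z /=; ring.
- apply: Or32; exists (lift ord0 j); apply/fprods_in_predC1_lift => a /sub.
  by apply: fprods_in_eqr => z /=; ring.
- apply: Or33; apply/fprods_in_recl => // a /sub.
  by apply: fprods_in_eqr => z /=; ring.
Qed.

Lemma weakly_absorbing_colon_splits m t :
  weakly_n_absorbing (m + t) I -> colon_splits m t.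
Proof.
elim: t m => [|t IH] m hw; first by apply: colon_splits0; rewrite addn0 in hw.
by apply: colon_splitsS; apply: IH; rewrite addSnnS.
Qed.

End WeaklyAbsorbing.

Section Equivalences.
Variables (R : comNzRingType) (I : R -> Prop).

Lemma strongly_weakly_absorbing_weakly n :
  strongly_weakly_n_absorbing n I -> weakly_n_absorbing n I.
Proof.
case=> pI sw; split=> // a a0 Ia; have idI := pI.1.
have prod_enum (P : pred 'I_n.+1) :
    \prod_(i <- [seq i <- enum 'I_n.+1 | P i]) a i = \prod_(i < n.+1 | P i) a i.
  by rewrite big_filter big_enum_cond.
have nz : exists z, iprodl [seq principal (a i) | i <- enum 'I_n.+1] z /\ z <> 0.
  exists (\prod_(i <- enum 'I_n.+1) a i); split; first exact: iprodl_prod_principal.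
  by rewrite -(filter_predT (enum _)) prod_enum; apply/eqP.
have sub : subI (iprodl [seq principal (a i) | i <- enum 'I_n.+1]) I.
  by apply/subI_iprodl_principal; rewrite // -(filter_predT (enum _)) prod_enum.
have [j] := sw _ (fun i => principal_id (a i)) nz sub.
by move/subI_iprodl_principal => /(_ idI); rewrite prod_enum; exists j.
Qed.

Lemma weakly_absorbing_condC n : u_ring R -> weakly_n_absorbing n I -> condC n I.
Proof.
move=> hu hw t tn F x idF nsub r; have idI := hw.1.1.
split=> [|[[i0]|[j0]|]]; last 3 first.
- exact: colon_mixprod_omx_sub.
- exact: colon_mixprod_omI_sub.
- exact: colon_zero_sub.
move/(colon_mixprod _ _ _ idI) => Hr.
have hw' : weakly_n_absorbing (n - t + t) I by rewrite subnK.
have nsub' := fun H => nsub ((subI_mixprod x F idI).2 H).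
have [[i0 H]|[j0 H]|H] := weakly_absorbing_colon_splits hu idI hw' idF nsub' Hr.
- by apply: Or31; exists i0; apply/colon_mixprod_omx.
- by apply: Or32; exists j0; apply/colon_mixprod_omI.
- by apply: Or33; apply/colon_mixprod => //; apply: zeroI_id.
Qed.

Lemma condC_condD n : u_ring R -> is_id I -> condC n I -> condD n I.
Proof.
move=> hu idI hc t tn F x idF nsub; have colE := hc t tn F x idF nsub.
have [[i0 sub]|[j0 sub]|sub] := u_ring_cover3 hu (colon_id _ idI)
  (fun i => colon_id (mixprod_omx x F i) idI) (fun j => colon_id (mixprod_omI x F j) idI)
  (colon_id (mixprod x F) (zeroI_id R)) (fun r => (colE r).1).
- apply: Or31; exists i0 => r; split=> [/sub //|Hr].
  by apply/colE; apply: Or31; exists i0.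
- apply: Or32; exists j0 => r; split=> [/sub //|Hr].
  by apply/colE; apply: Or32; exists j0.
- apply: Or33 => r; split=> [/sub //|Hr].
  by apply/colE; apply: Or33.
Qed.

Lemma condD_strongly_weakly_absorbing n :
  proper_id I -> condD n I -> strongly_weakly_n_absorbing n I.
Proof.
move=> pI hd; have idI := pI.1; split=> // F idF [z [Pz z0]].
rewrite -{1}[enum _]filter_predT subI_iprodl_fam // => sub.
(* Condition (d) for t = n and the last n ideals; there are no elements x_i. *)
pose F' (j : 'I_n) := F (lift ord0 j); pose x (i : 'I_(n - n)) : R := 0.
have x1 : \prod_(i < n - n) x i = 1.
  by apply: big1 => -[i lt_i_nn]; have := leq_trans lt_i_nn (eq_leq (subnn n)).
have colF0 a : F ord0 a -> colon I (mixprod x F') a.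
  move=> Fa; apply/colon_mixprod => //; rewrite x1.
  by move/fprods_in_recl: sub => /(_ isT a Fa); apply: fprods_inW => w; rewrite mul1r.
have [sub'|nsub] := classic (subI (mixprod x F') I).
  exists ord0; apply/subI_iprodl_fam => //; apply/fprods_in_predC1_0.
  by move/subI_mixprod: sub' => /(_ idI); rewrite x1; apply: fprods_inW => w; rewrite mul1r.
case: (hd n (leqnn n) F' x (fun j => idF _) nsub) => [[i]|[j colE]|colE].
- by case: i => i lt_i_nn; have := leq_trans lt_i_nn (eq_leq (subnn n)).
- exists (lift ord0 j); apply/subI_iprodl_fam => //; apply/fprods_in_predC1_lift.
  move=> a /colF0/colE/colon_mixprod_omI => /(_ idI).
  by rewrite x1; apply: fprods_inW => w; rewrite mul1r.
- case: z0; suff : subI (iprodl [seq F i | i <- enum 'I_n.+1 & predT i]) (@zeroI R).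
    by rewrite filter_predT; apply.
  apply/subI_iprodl_fam; first exact: zeroI_id.
  apply/fprods_in_recl => // a /colF0/colE/colon_mixprod => /(_ (zeroI_id R)).
  by rewrite x1; apply: fprods_inW => w; rewrite mul1r.
Qed.

End Equivalences.

Theorem mainTheorem2 (R : comNzRingType) (n : nat) (I : R -> Prop) :
  u_ring R -> (0 < n)%N -> proper_id I ->
  [<-> strongly_weakly_n_absorbing n I;
       weakly_n_absorbing n I;
       condC n I;
       condD n I].
Proof.
move=> hu _ pI; tfae.
- exact: strongly_weakly_absorbing_weakly.
- exact: weakly_absorbing_condC.
- exact: condC_condD pI.1.
- exact: condD_strongly_weakly_absorbing.
Qed.
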